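(* In the setting described in the context, assume $$\sum_{x\in A}\alpha_x<\sum_{y\in N(A)}\beta_y\qquad\text{for all nonempty } A\subseteq\mathcal X,$$ where $N(A)=\bigcup_{x\in A}N_x$. Then $W(t)$, restricted to the set $\mathcal W$ of allocation states, is an ergodic time-reversible Markov process whose unique invariant probability measure is $$\mu_\gamma(W)=\frac{\binom{\alpha}{W}e^{\gamma\Psi(W)}}{\sum_{W'\in\mathcal W}\binom{\alpha}{W'}e^{\gamma\Psi(W')}},\qquad W\in\mathcal W,$$ where $\binom{\alpha}{W}=\frac{\prod_x\alpha_x!}{\prod_{x,y}W_{xy}!}$ and $\Psi(W)=\sum_{y}\sum_{s=0}^{W_y}[\lambda_y-k_cs/\beta_y]+k_a\sum_{x,y}\sum_{s=0}^{W_{xy}}s$.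
   Context: $\mathcal X$ is a finite set of units, $\mathcal G=(\mathcal X,\mathcal E)$ a directed graph, $N_x=\{y:(x,y)\in\mathcal E\}$, $\alpha_x,\beta_x$ non-negative integers. A partial allocation state is a matrix $W\in\mathbb N^{\mathcal X\times\mathcal X}$ with $W_{xy}=0$ whenever $(x,y)\notin\mathcal E$, $W^x:=\sum_yW_{xy}\le\alpha_x$, $W_y:=\sum_xW_{xy}\le\beta_y$; it is an allocation state if $W^x=\alpha_x$ for all $x$; $\mathcal W_p,\mathcal W$ denote these sets; $e_{xy}$ is the matrix unit. Fix reals $\lambda_y$, $k_c,k_a\ge0$, $\gamma>0$, and let $f_{xy}(W)=\lambda_y-k_cW_y/\beta_y+k_aW_{xy}$ (in $\Psi$ the $s=0$ term contributes $\lambda_y$). Let $\mathcal X^x(W)=\{y\in N_x:W_y<\beta_y\}$ and $p_y(W,x)=e^{\gamma f_{xy}(W+e_{xy})}/\sum_{y'\in\mathcal X^x(W)}e^{\gamma f_{xy'}(W+e_{xy'})}$. Let $P_{\rm all}(W,x),P_{\rm dis}(W,x)\ge0$ with sum $1$, $P_{\rm all}(W,x)=0$ if $W^x=\alpha_x$, $P_{\rm dis}(W,x)=0$ if $W^x=0$. $W(t)$ is the continuous-time Markov process on $\mathcal W_p$ in which each unit $x$ activates at the times of an independent Poisson clock of rate $\nu_x$, where (standing assumption of the paper) $\nu_x=\nu\alpha_x$ for some $\nu>0$; upon activation in state $W$, with probability $P_{\rm all}(W,x)$ unit $x$ chooses $y^*\in\mathcal X^x(W)$ with probability $p_{y^*}(W,x)$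 and the state becomes $W+e_{xy^*}$ (nothing happens if $\mathcal X^x(W)=\emptyset$); with probability $P_{\rm dis}(W,x)$ it chooses $\bar y$ with probability $W_{x\bar y}/W^x$, then $y^*\in\mathcal X^x(W-e_{x\bar y})$ with probability $p_{y^*}(W-e_{x\bar y},x)$, and the state becomes $W-e_{x\bar y}+e_{xy^*}$. From an allocation state only distribution moves occur, so $\mathcal W$ is closed under the dynamics. *)

From HB Require Import structures.
From mathcomp Require Import all_boot all_order all_algebra.
From mathcomp Require Import reals sequences exp.
Unset Printing Implicit Defensive.
Import Order.TTheory GRing.Theory Num.Theory.
Local Open Scope ring_scope.

Definition natmat (X : finType) := X -> X -> nat.

Section Model.
Variables (R : realType) (X : finType) (E : rel X) (alpha beta : X -> nat).
Variables (lam : X -> R) (kc ka gamma nu : R).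
Variables (Pall Pdis : natmat X -> X -> R).

Definition rowsum (W : natmat X) (x : X) : nat := (\sum_(y : X) W x y)%N.
Definition colsum (W : natmat X) (y : X) : nat := (\sum_(x : X) W x y)%N.

Definition partial_state (W : natmat X) : bool :=
  [&& [forall x, forall y, ~~ E x y ==> (W x y == 0%N)],
      [forall x, rowsum W x <= alpha x]%N &
      [forall y, colsum W y <= beta y]%N].
Definition alloc_state (W : natmat X) : bool :=
  partial_state W && [forall x, rowsum W x == alpha x].

Definition addE (W : natmat X) (x y : X) : natmat X :=
  fun a b => (W a b + ((a == x) && (b == y)))%N.
Definition subE (W : natmat X) (x y : X) : natmat X :=
  fun a b => (W a b - ((a == x) && (b == y)))%N.

Definition eqmat (W W' : natmat X) : bool := [forall a, forall b, W a b == W' a b].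

Definition fxy (x y : X) (W : natmat X) : R :=
  lam y - kc * (colsum W y)%:R / (beta y)%:R + ka * (W x y)%:R.

Definition avail (W : natmat X) (x y : X) : bool := E x y && (colsum W y < beta y)%N.

Definition pchoice (W : natmat X) (x y : X) : R :=
  if avail W x y then
    expR (gamma * fxy x y (addE W x y)) /
    \sum_(y' | avail W x y') expR (gamma * fxy x y' (addE W x y'))
  else 0.

(* jump rate from W to W' of the process W(t): unit x activates at rate
   nu_x = nu * alpha_x, then allocates or redistributes as described. *)
Definition rate (W W' : natmat X) : R :=
  \sum_(x : X) nu * (alpha x)%:R *
    (Pall W x * \sum_(y : X) pchoice W x y * (eqmat (addE W x y) W')%:R
     + Pdis W x * \sum_(yb : X) ((W x yb)%:R / (rowsum W x)%:R) *
         \sum_(y : X) pchoice (subE W x yb) x y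
                      * (eqmat (addE (subE W x yb) x y) W')%:R).

Definition multinom (W : natmat X) : R :=
  (\prod_(x : X) (alpha x)`!)%:R / (\prod_(x : X) \prod_(y : X) (W x y)`!)%:R.
Definition Psi (W : natmat X) : R :=
  \sum_(y : X) \sum_(0 <= s < (colsum W y).+1) (lam y - kc * s%:R / (beta y)%:R)
  + ka * \sum_(x : X) \sum_(y : X) \sum_(0 <= s < (W x y).+1) (s%:R : R).

(* Finite encoding of the state space: every allocation state has entries
   W_xy <= alpha_x <= max alpha < bnd, so it is represented exactly once
   by an element of [state]. *)
Definition bnd : nat := (\max_(x : X) alpha x).+1.
Definition state := {ffun X * X -> 'I_bnd}.
Definition toMat (s : state) : natmat X := fun x y => nat_of_ord (s (x, y)).
Definition allocS (s : state) : bool := alloc_state (toMat s).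

Definition Qgen (s s' : state) : R :=
  if s == s' then - \sum_(s'' | allocS s'' && (s'' != s)) rate (toMat s) (toMat s'')
  else rate (toMat s) (toMat s').

Definition gibbs_weight (s : state) : R := multinom (toMat s) * expR (gamma * Psi (toMat s)).
Definition mu (s : state) : R :=
  gibbs_weight s / \sum_(s' | allocS s') gibbs_weight s'.

Definition jump : rel state :=
  fun s s' => [&& allocS s, allocS s' & 0 < rate (toMat s) (toMat s')].

Definition nbhd (A : {set X}) : {set X} := [set y | [exists x in A, E x y]].
End Model.

From Pilot Require Import Defs.
From HB Require Import structures.
From mathcomp Require Import all_boot all_order all_algebra.
From mathcomp Require Import reals sequences exp.
From mathcomp Require Import zify ring.
From Stdlib Require Import FunctionalExtensionality Relations.
Import Order.TTheory GRing.Theory Num.Theory.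

(** The dynamics only ever moves one unit of some [x] from a resource [b] to a
    non-saturated neighbour [y], at rate [nu W_xb p_y(W - e_xb, x)] on allocation states.
    Since [Psi] is a potential for the gains, [Psi (V + e_xy) = Psi V + f_xy (V + e_xy)],
    the weight [binom(alpha, W) e^(gamma Psi W)] times this rate is invariant under
    exchanging the move with its reverse; so [mu] satisfies detailed balance and is
    invariant.  Hall's strict condition says that every set of units closed under
    "holds a unit on a resource adjacent to" has a non-saturated neighbour; augmenting
    paths then produce an allocation state and bring any two allocation states strictly
    closer by moves on both sides, which makes the chain irreducible.  Uniqueness is the
    maximum principle for the density of an invariant measure with respect to [mu]. *)

Set Implicit Arguments.
Unset Strict Implicit.
Unset Printing Implicit Defensive.

Lemma sum_indicator (I : finType) (P : pred I) (i0 : I) :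
  (\sum_(i : I) (P i && (i == i0)) = P i0)%N.
Proof. by rewrite (bigD1 i0) //= eqxx andbT big1 ?addn0 // => i /negbTE ->; rewrite andbF. Qed.

Lemma sum_indicator2 (I J : finType) (i0 : I) (j0 : J) :
  (\sum_(i : I) \sum_(j : J) ((i == i0) && (j == j0)) = 1)%N.
Proof.
under eq_bigr => i _ do rewrite (sum_indicator (fun=> i == i0)).
by rewrite (sum_indicator predT).
Qed.

Lemma exists_gt_of_sum_eq (I : finType) (f g : I -> nat) (i0 : I) :
  (\sum_i f i = \sum_i g i)%N -> f i0 < g i0 -> exists i, g i < f i.
Proof.
move=> Hsum Hi0; apply/existsP; apply: contraT; rewrite negb_exists => /forallP Hle.
have /leqif_sum [_] : forall i, true -> f i <= g i ?= iff (f i == g i).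
  by move=> i _; split; [rewrite leqNgt; apply: Hle | rewrite eq_sym].
by rewrite Hsum eqxx => /esym /forallP /(_ i0) /= /eqP Heq; rewrite Heq ltnn in Hi0.
Qed.

Lemma path_all_target (T : Type) (e : rel T) (M : pred T) x s :
  path [rel a b | e a b && M b] x s -> all M s.
Proof. by elim: s x => //= y s IH x /andP [/andP [_ ->] /IH]. Qed.

Lemma natmat_ext (X : finType) (W W' : natmat X) : (forall a c, W a c = W' a c) -> W = W'.
Proof. by move=> H; do 2 (apply: functional_extensionality => ?); apply: H. Qed.

Lemma natmat_eqVneq (X : finType) (W W' : natmat X) : W = W' \/ exists x c, W x c != W' x c.
Proof.
case: (boolP [exists x, exists c, W x c != W' x c]) => [/existsP [x /existsP [c Hc]]|].
  by right; exists x, c.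
rewrite negb_exists => /forallP Heq; left; apply: natmat_ext => x c.
by move: (Heq x); rewrite negb_exists => /forallP /(_ c) /negPn /eqP.
Qed.

(** * Moves between allocation states *)

Section Moves.
Variables (X : finType) (E : rel X) (alpha beta : X -> nat).

Local Notation rowsum := (rowsum X).
Local Notation colsum := (colsum X).
Local Notation addE := (addE X).
Local Notation subE := (subE X).
Local Notation partial := (partial_state X E alpha beta).
Local Notation alloc := (alloc_state X E alpha beta).

Lemma partial_stateP W : reflect
  [/\ forall x y, ~~ E x y -> W x y = 0, forall x, rowsum W x <= alpha x
    & forall y, colsum W y <= beta y] (partial W).
Proof.
apply: (iffP and3P) => [[/forallP H1 /forallP H2 /forallP H3]|[H1 H2 H3]]; split => //.
- by move=> x y Hxy; have /forallP/(_ y) := H1 x; rewrite Hxy => /eqP.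
- by apply/forallP=> x; apply/forallP=> y; apply/implyP=> /H1 ->.
- exact/forallP.
- exact/forallP.
Qed.

Lemma alloc_stateP W : reflect (partial W /\ forall x, rowsum W x = alpha x) (alloc W).
Proof.
apply: (iffP andP) => [[H /forallP H2]|[H H2]]; split => //.
- by move=> x; apply/eqP.
- by apply/forallP => x; rewrite H2.
Qed.

Lemma partial_support W x y : partial W -> 0 < W x y -> E x y.
Proof. by case/partial_stateP => H _ _; apply: contraTT => /H ->. Qed.

Lemma le_colsum W x y : W x y <= colsum W y.
Proof. by rewrite /colsum (bigD1 x) //= leq_addr. Qed.

Lemma le_rowsum W x y : W x y <= rowsum W x.
Proof. by rewrite /rowsum (bigD1 y) //= leq_addr. Qed.

Lemma rowsum_addE W x y a : rowsum (addE W x y) a = rowsum W a + (a == x).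
Proof. by rewrite /rowsum /addE big_split /= (sum_indicator (fun=> a == x)). Qed.

Lemma colsum_addE W x y c : colsum (addE W x y) c = colsum W c + (c == y).
Proof.
rewrite /colsum /addE big_split /=; congr addn.
by under eq_bigr do rewrite andbC; apply: (sum_indicator (fun=> c == y)).
Qed.

Lemma rowsum_subE W x b a : 0 < W x b -> rowsum (subE W x b) a = rowsum W a - (a == x).
Proof.
move=> Wxb; rewrite /rowsum /subE /=.
have [->|_] := eqVneq a x; last by rewrite subn0; under eq_bigr do rewrite andFb subn0.
rewrite (bigD1 b) //= [in RHS](bigD1 b) //= eqxx.
by rewrite (eq_bigr (fun c => W x c)) => [|c /negbTE ->]; rewrite ?subn0 //; lia.
Qed.

Lemma colsum_subE W x b c : 0 < W x b -> colsum (subE W x b) c = colsum W c - (c == b).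
Proof.
move=> Wxb; rewrite /colsum /subE /=.
have [->|_] := eqVneq c b; last by rewrite subn0; under eq_bigr do rewrite andbF subn0.
rewrite (bigD1 x) //= [in RHS](bigD1 x) //= eqxx.
by rewrite (eq_bigr (fun a => W a b)) => [|a /negbTE ->]; rewrite ?subn0 //; lia.
Qed.

Lemma addE_partial W x y : partial W -> E x y -> rowsum W x < alpha x ->
  colsum W y < beta y -> partial (addE W x y).
Proof.
case/partial_stateP=> H1 H2 H3 Exy Hx Hy; apply/partial_stateP; split.
- move=> a c Eac; rewrite /addE H1 //; case: (a =P x) => [Hax|] //=.
  by case: (c =P y) => [Hcy|] //; subst; rewrite Exy in Eac.
- by move=> a; rewrite rowsum_addE; have := H2 a; case: eqP => [->|] /=; lia.
- by move=> c; rewrite colsum_addE; have := H3 c; case: eqP => [->|] /=; lia.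
Qed.

Definition transfer (W : natmat X) (x b y : X) : natmat X := addE (subE W x b) x y.

Lemma transferE W x b y a c :
  transfer W x b y a c = W a c - ((a == x) && (c == b)) + ((a == x) && (c == y)).
Proof. by []. Qed.

Lemma transfer_id W x b : 0 < W x b -> transfer W x b b = W.
Proof.
move=> Wxb; apply: natmat_ext => a c; rewrite transferE.
by case: (a =P x) => [->|] /=; case: (c =P b) => [->|] /=; lia.
Qed.

Lemma transfer_gt0 W x b y : 0 < W x b -> 0 < transfer W x b y x y.
Proof. by move=> Wxb; rewrite transferE !eqxx /=; case: eqP => [->|]; lia. Qed.

Lemma transferK W x b y : 0 < W x b -> transfer (transfer W x b y) x y b = W.
Proof.
move=> Wxb; apply: natmat_ext => a c; rewrite !transferE.
case: (a =P x) => [->|] /=; last by rewrite !subn0 !addn0.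
by case: (c =P b) => [->|] /=; lia.
Qed.

Lemma rowsum_transfer W x b y a : 0 < W x b -> rowsum (transfer W x b y) a = rowsum W a.
Proof.
move=> Wxb; have := le_rowsum W x b.
by rewrite rowsum_addE rowsum_subE //; case: eqP => [->|] /=; lia.
Qed.

Lemma colsum_transfer W x b y c : 0 < W x b ->
  colsum (transfer W x b y) c = colsum W c - (c == b) + (c == y).
Proof. by move=> Wxb; rewrite colsum_addE colsum_subE. Qed.

Definition step (P : pred X) (W W' : natmat X) : Prop :=
  exists x b y, [/\ P x && (0 < W x b), E x y, colsum W y < beta y, b != y
                  & W' = transfer W x b y].

Definition reach (P : pred X) : natmat X -> natmat X -> Prop :=
  clos_refl_trans (natmat X) (step P).

Lemma reach_refl P W : reach P W W.
Proof. exact: rt_refl. Qed.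

Lemma reach_trans P W1 W2 W3 : reach P W1 W2 -> reach P W2 W3 -> reach P W1 W3.
Proof. exact: rt_trans. Qed.

Lemma reach_mono (P Q : pred X) W W' : (forall x, P x -> Q x) -> reach P W W' -> reach Q W W'.
Proof.
move=> PQ; elim=> [W1 W2 HS|W1|W1 W2 W3 _ IH12 _ IH23]; last exact: reach_trans IH12 IH23.
- move: HS => [x [b [y [/andP [Px Wxb] *]]]].
  by apply: rt_step; exists x, b, y; split; rewrite ?PQ ?Wxb.
- exact: reach_refl.
Qed.

Lemma step_partial P W W' : step P W W' -> partial W -> partial W'.
Proof.
move=> [x [b [y [/andP [_ Wxb] Exy Hy Hby ->]]]] /partial_stateP [H1 H2 H3].
apply/partial_stateP; split.
- move=> a c Eac; rewrite transferE H1 //; case: (a =P x) => [Hax|] /=; last lia.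
  by case: (c =P y) => [Hcy|] /=; [subst; rewrite Exy in Eac | lia].
- by move=> a; rewrite rowsum_transfer.
- move=> c; rewrite colsum_transfer //; have := H3 c.
  case: (c =P b) => [->|_]; first by rewrite (negbTE Hby) /=; lia.
  by case: (c =P y) => [->|_] /=; lia.
Qed.

Lemma step_rowsum P W W' a : step P W W' -> rowsum W' a = rowsum W a.
Proof. by move=> [x [b [y [/andP [_ Wxb] _ _ _ ->]]]]; rewrite rowsum_transfer. Qed.

Lemma step_row P W W' a : step P W W' -> ~~ P a -> W' a = W a.
Proof.
move=> [x [b [y [/andP [Px _] _ _ _ ->]]]] Pa; apply: functional_extensionality => c.
by rewrite transferE; case: eqP => [Hax|] /=; [rewrite Hax Px in Pa | rewrite subn0 addn0].
Qed.

Lemma step_sym P W W' : partial W -> step P W W' -> step P W' W.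
Proof.
move=> /partial_stateP [H1 _ H3] [x [b [y [/andP [Px Wxb] Exy Hy Hby ->]]]].
exists x, y, b; split => //; first by rewrite Px transfer_gt0.
- by apply: contraTT Wxb => /H1 ->.
- by rewrite colsum_transfer // eqxx (negbTE Hby); have := H3 b; have := le_colsum W x b; lia.
- by rewrite eq_sym.
- by rewrite transferK.
Qed.

Lemma reach_partial P W W' : reach P W W' -> partial W -> partial W'.
Proof.
elim=> [W1 W2|W1|W1 W2 W3 _ IH12 _ IH23]; [exact: step_partial | exact: id | by move/IH12/IH23].
Qed.

Lemma reach_rowsum P W W' a : reach P W W' -> rowsum W' a = rowsum W a.
Proof. by elim=> [W1 W2|W1|W1 W2 W3 _ -> _ ->] //; apply: step_rowsum. Qed.

Lemma reach_alloc P W W' : reach P W W' -> alloc W -> alloc W'.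
Proof.
move=> HR /alloc_stateP [HW Hrow]; apply/alloc_stateP; split; first exact: reach_partial HR HW.
by move=> x; rewrite (reach_rowsum _ HR).
Qed.

Lemma reach_row P W W' a : reach P W W' -> ~~ P a -> W' a = W a.
Proof. by move=> HR Pa; elim: HR => [W1 W2 /step_row ->|W1|W1 W2 W3 _ -> _ ->]. Qed.

Lemma reach_sym P W W' : reach P W W' -> partial W -> reach P W' W.
Proof.
elim=> [W1 W2 HS HW1|W1 _|W1 W2 W3 HR12 IH12 _ IH23 HW1].
- exact/rt_step/step_sym.
- exact: reach_refl.
- exact: reach_trans (IH23 (reach_partial HR12 HW1)) (IH12 HW1).
Qed.

Lemma reach_transfer (P : pred X) W x b y : P x -> 0 < W x b -> E x y ->
  (colsum W y < beta y) || (y == b) -> reach P W (transfer W x b y).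
Proof.
move=> Px Wxb Exy; have [->|Hyb] := eqVneq y b.
  by rewrite transfer_id // => _; apply: reach_refl.
by rewrite orbF => Hy; apply: rt_step; exists x, b, y; split; rewrite ?Px ?Wxb // eq_sym.
Qed.

Definition splice (P : pred X) (W1 W2 : natmat X) : natmat X :=
  fun x => if P x then W1 x else W2 x.

Lemma reach_splice P W W1 : reach P W W1 -> forall W',
  (forall x, P x -> W' x = W x) -> (forall c, colsum W' c = colsum W c) ->
  reach P W' (splice P W1 W') /\ forall c, colsum (splice P W1 W') c = colsum W1 c.
Proof.
elim=> [{}W {}W1 [x [b [y [/andP [Px Wxb] Exy Hy Hby ->]]]]|{}W|W2 W3 W4 _ IH23 _ IH34]
  W' Hrow Hcol.
- have Wxb' : 0 < W' x b by rewrite Hrow.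
  have -> : splice P (transfer W x b y) W' = transfer W' x b y.
    apply: natmat_ext => a c; rewrite /splice !transferE.
    by case: ifP => [Pa|Pa]; [rewrite Hrow | case: eqP => [Hax|] /=; [rewrite Hax Px in Pa|lia]].
  split; last by move=> c; rewrite !colsum_transfer // Hcol.
  by apply: rt_step; exists x, b, y; split; rewrite ?Px ?Wxb' ?Hcol.
- have -> : splice P W W' = W'.
    by apply: functional_extensionality => x; rewrite /splice; case: ifP => // /Hrow.
  by split; [apply: reach_refl | apply: Hcol].
- have [HR Hcol'] := IH23 W' Hrow Hcol.
  have Hrow' : forall x, P x -> splice P W3 W' x = W3 x by move=> x Px; rewrite /splice Px.
  have [HR' Hcol''] := IH34 (splice P W3 W') Hrow' Hcol'.
  have Esplice : splice P W4 (splice P W3 W') = splice P W4 W'.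
    by apply: functional_extensionality => x; rewrite /splice; case: (P x).
  by rewrite Esplice in HR' Hcol''; split => //; apply: reach_trans HR HR'.
Qed.

Lemma transfer_unsaturates W x b y : partial W -> 0 < W x b -> colsum W y < beta y ->
  colsum (transfer W x b y) b < beta b.
Proof.
move=> /partial_stateP [_ _ /(_ b) Hb] Wxb Hy; have := le_colsum W x b.
by rewrite colsum_transfer // eqxx; case: (b =P y) => [Hby|_] /=; [subst; lia | lia].
Qed.

Definition occupies_nbr (W : natmat X) : rel X :=
  fun a x => [exists y, E a y && (0 < W x y)].

(* Resource [b] is freed by shifting one unit along the augmenting path, starting from
   its far end. *)
Lemma reach_free_by_path p W z b : partial W -> 0 < W z b ->
  path (occupies_nbr W) z p -> uniq (z :: p) ->
  (exists2 f, E (last z p) f & colsum W f < beta f) ->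
  exists W1, reach [pred x | x \in z :: p] W W1 /\ colsum W1 b < beta b.
Proof.
move=> HW; elim: p z b => [|z1 p IH] z b Wzb /=.
  move=> _ _ [f Ezf Hf]; exists (transfer W z b f); split.
    by apply: reach_transfer; rewrite ?inE ?eqxx ?Hf.
  exact: transfer_unsaturates.
move=> /andP [/existsP [y1 /andP [Ezy1 Wz1y1]] Hp] /andP [z_notin Hu] Hf.
have [W1 [HR Hy1]] := IH z1 y1 Wz1y1 Hp Hu Hf.
have W1z : W1 z = W z by apply: (reach_row HR).
have W1zb : 0 < W1 z b by rewrite W1z.
exists (transfer W1 z b y1); split; last exact: transfer_unsaturates (reach_partial HR HW) W1zb Hy1.
apply: reach_trans (reach_mono _ HR) (reach_transfer _ W1zb Ezy1 _).
- by move=> x /= Hx; rewrite inE Hx orbT.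
- by rewrite /= inE eqxx.
- by rewrite Hy1.
Qed.

Definition mdist (W W' : natmat X) : nat :=
  \sum_x \sum_c (W x c - W' x c + (W' x c - W x c)).

Lemma mdistC W W' : mdist W W' = mdist W' W.
Proof. by apply: eq_bigr => x _; apply: eq_bigr => c _; rewrite addnC. Qed.

Lemma mdist_transfer W W' u b y v : W' u b < W u b -> W u y < W' u y ->
  mdist (transfer W u b v) (transfer W' u y v) + 2 = mdist W W'.
Proof.
move=> Hb Hy; have Hby : b != y by apply/eqP => Eby; subst; lia.
have Hentry : forall x c, (transfer W u b v x c - transfer W' u y v x c
    + (transfer W' u y v x c - transfer W u b v x c))
    + ((x == u) && (c == b)) + ((x == u) && (c == y)) = W x c - W' x c + (W' x c - W x c).
  move=> x c; rewrite !transferE; case: (x =P u) => [->|_] /=; last by rewrite !subn0 !addn0.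
  case: (c =P b) => [->|_]; first by rewrite (negbTE Hby) /=; lia.
  by case: (c =P y) => [->|_] /=; lia.
rewrite /mdist; under [RHS]eq_bigr => x _ do under eq_bigr => c _ do rewrite -Hentry.
under [RHS]eq_bigr => x _ do rewrite 2!big_split /=.
by rewrite 2!big_split /= !sum_indicator2 -addnA.
Qed.

Lemma row_split W W' x c : rowsum W x = rowsum W' x -> W x c != W' x c ->
  exists b y, W' x b < W x b /\ W x y < W' x y.
Proof.
move=> Hr; rewrite neq_ltn => /orP [Hlt|Hlt].
- by have [b Hb] := exists_gt_of_sum_eq Hr Hlt; exists b, c.
- by have [y Hy] := exists_gt_of_sum_eq (esym Hr) Hlt; exists c, y.
Qed.

Definition direct_move (W W' : natmat X) : bool :=
  [exists x, exists b, exists y, [&& W' x b < W x b, W x y < W' x y & colsum W y < beta y]].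

Lemma improve_direct W W' : partial W' -> direct_move W W' ->
  exists V, reach predT W V /\ mdist V W' + 2 = mdist W W'.
Proof.
move=> HW' /existsP [x /existsP [b /existsP [y /and3P [Hb Hy Hcy]]]].
exists (transfer W x b y); split.
  by apply: reach_transfer; rewrite ?Hcy //; [lia | apply: partial_support HW' _; lia].
by have := mdist_transfer y Hb Hy; rewrite (transfer_id (W := W')) //; lia.
Qed.

Lemma colsum_le_of_no_direct W W' : alloc W -> alloc W' -> ~~ direct_move W W' ->
  forall c, colsum W' c <= colsum W c.
Proof.
move=> /alloc_stateP [_ Hr] /alloc_stateP [/partial_stateP [_ _ H3'] Hr'] Hnd c.
case: (boolP [exists x, W x c < W' x c]) => [/existsP [x Hx]|].
  have [b [_ [Hb _]]] := row_split (etrans (Hr x) (esym (Hr' x))) (negbT (ltn_eqF Hx)).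
  apply: leq_trans (H3' c) _; rewrite leqNgt; apply: contra Hnd => Hc.
  by apply/existsP; exists x; apply/existsP; exists b; apply/existsP; exists c; rewrite Hb Hx Hc.
by rewrite negb_exists => /forallP Hle; apply: leq_sum => x _; rewrite leqNgt Hle.
Qed.

Section Hall.
Hypothesis hall : forall A : {set X}, A != set0 ->
  (\sum_(x in A) alpha x < \sum_(y in nbhd X E A) beta y)%N.

Lemma hall_free_column W (A : {set X}) : partial W -> A != set0 ->
  (forall a y x, a \in A -> E a y -> 0 < W x y -> x \in A) ->
  exists a y, [/\ a \in A, E a y & colsum W y < beta y].
Proof.
case/partial_stateP=> _ Hrow _ A0 Aclosed.
case: (boolP [exists a in A, exists y, E a y && (colsum W y < beta y)]).
  by case/exists_inP=> a Aa /existsP [y /andP [Eay Hy]]; exists a, y.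
rewrite negb_exists_in => /forall_inP Hsat; exfalso.
have := hall A0; apply/negP; rewrite -leqNgt.
apply: (@leq_trans (\sum_(y in nbhd X E A) \sum_(x in A) W x y)).
  apply: leq_sum => y; rewrite inE => /exists_inP [a Aa Eay].
  have -> : \sum_(x in A) W x y = colsum W y.
    rewrite /colsum [RHS](bigID (mem A)) /= [X in _ = _ + X]big1 ?addn0 // => x /negP xA.
    by apply/eqP; rewrite -leqn0 leqNgt; apply: contra_notN xA => /(Aclosed a y x Aa Eay).
  by have := Hsat a Aa; rewrite negb_exists => /forallP /(_ y); rewrite Eay /= -leqNgt.
rewrite exchange_big /=; apply: leq_sum => x _; apply: leq_trans (Hrow x).
by rewrite /rowsum [X in _ <= X](bigID (mem (nbhd X E A))) leq_addr.
Qed.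

(* Hall's condition applied to the set of units reachable from [Z] through [M]. *)
Lemma reach_free_nbr (Z M : pred X) W z0 : partial W -> Z z0 -> (forall x, Z x || M x) ->
  exists z v (S : pred X) W1, [/\ Z z, E z v, (forall x, S x -> M x && (x != z)),
                                 reach S W W1 & colsum W1 v < beta v].
Proof.
move=> HW Zz0 ZM.
pose e := [rel a x | occupies_nbr W a x && M x].
pose A := [set x | [exists z, Z z && connect e z x]].
have A0 : A != set0.
  by apply/set0Pn; exists z0; rewrite inE; apply/existsP; exists z0; rewrite Zz0 connect0.
have Aclosed : forall a y x, a \in A -> E a y -> 0 < W x y -> x \in A.
  move=> a y x; rewrite !inE => /existsP [z /andP [Zz Hza]] Eay Wxy; apply/existsP.
  have /orP [Zx|Mx] := ZM x; first by exists x; rewrite Zx connect0.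
  exists z; rewrite Zz (connect_trans Hza) // connect1 //= Mx andbT.
  by apply/existsP; exists y; rewrite Eay Wxy.
have [a [f [Aa Eaf Hf]]] := hall_free_column HW A0 Aclosed.
move: Aa; rewrite inE => /existsP [z /andP [Zz /connectP [p Hp Ha]]].
rewrite Ha in Eaf; move: Eaf; case: (shortenP Hp) => [[|u q]] /= Hq Hu _ Eqf.
  by exists z, f, pred0, W; split => //; apply: reach_refl.
move: Hq Hu => /andP [/andP [/existsP [y /andP [Ezy Wuy]] Mu] Hq] /andP [z_notin Hu].
have Hq' : path (occupies_nbr W) u q by apply: sub_path Hq => a' x' /andP [].
have Mq : all M (u :: q) by rewrite /= Mu (path_all_target (e := occupies_nbr W) Hq).
have [W1 [HR Hy]] := reach_free_by_path HW Wuy Hq' Hu (ex_intro2 _ _ f Eqf Hf).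
exists z, y, [pred x | x \in u :: q], W1; split => // x /= xuq.
by rewrite (allP Mq x xuq) /=; apply/eqP => xz; rewrite -xz xuq in z_notin.
Qed.

Lemma augment W x0 : partial W -> rowsum W x0 < alpha x0 ->
  exists W', partial W' /\ forall x, rowsum W' x = rowsum W x + (x == x0).
Proof.
move=> HW Hx0.
have [z [v [S [W1 [/eqP -> Ex0v _ HR Hv]]]]] :=
  reach_free_nbr (Z := pred1 x0) (M := predT) HW (eqxx x0) (fun x => orbT _).
exists (addE W1 x0 v); split; last by move=> x; rewrite rowsum_addE (reach_rowsum _ HR).
by apply: addE_partial => //; [exact: reach_partial HR HW | rewrite (reach_rowsum _ HR)].
Qed.

Lemma exists_alloc_state : exists W, alloc W.
Proof.
suff Hdef : forall n W, partial W -> \sum_x (alpha x - rowsum W x) = n -> exists W, alloc W.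
  apply: (Hdef _ (fun _ _ => 0)) => //; apply/partial_stateP; split => // x.
  - by rewrite /rowsum big1.
  - by rewrite /colsum big1.
elim=> [|n IH] W HW Hn.
  exists W; apply/alloc_stateP; split => // x; case/partial_stateP: HW => _ /(_ x) Hx _.
  have : alpha x - rowsum W x <= 0 by rewrite -Hn (bigD1 x) //= leq_addr.
  lia.
have [x0 Hx0] : exists x0, rowsum W x0 < alpha x0.
  apply/existsP; apply: contraT; rewrite negb_exists => /forallP Hsat.
  by move: Hn; rewrite big1 // => x _; apply/eqP; rewrite subn_eq0 leqNgt Hsat.
have [W' [HW' Hrow]] := augment HW Hx0.
apply: (IH W' HW'); suff : \sum_x (alpha x - rowsum W' x) + 1 = n.+1 by lia.
rewrite -Hn (bigD1 x0) //= [RHS](bigD1 x0) //= Hrow eqxx.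
by under eq_bigr => x /negbTE Hx do rewrite Hrow Hx addn0; lia.
Qed.

(* With equal column sums, free a resource next to a row where [W] and [W'] differ by
   moves in rows where they agree, replay those moves on [W'], and then move one unit
   to that resource on each side. *)
Lemma improve_balanced W W' x0 c0 : alloc W -> alloc W' ->
  (forall c, colsum W' c = colsum W c) -> W x0 c0 != W' x0 c0 ->
  exists V V', [/\ reach predT W V, reach predT W' V' & mdist V V' + 2 = mdist W W'].
Proof.
move=> /alloc_stateP [HW Hr] /alloc_stateP [HW' Hr'] Hcol Hx0.
pose touched x := [exists c, W x c != W' x c].
have [z [v [S [W1 [Tz Ezv HS HR Hv]]]]] := reach_free_nbr (Z := touched) (M := predC touched)
  HW (introT existsP (ex_intro _ c0 Hx0)) (fun x => orbN _).
have Hagree : forall x, S x -> W' x = W x.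
  move=> x /HS /andP [/= Ux _]; apply: functional_extensionality => c; apply/eqP.
  by apply: contraNT Ux => Hc; apply/existsP; exists c; rewrite eq_sym.
have [HR' Hcol'] := reach_splice HR Hagree Hcol.
have Sz : ~~ S z by apply/negP => /HS /andP [/negP].
have W1z : W1 z = W z := reach_row HR Sz.
have W1'z : splice S W1 W' z = W' z by rewrite /splice (negbTE Sz).
have [c Hc] := existsP Tz.
have [b [y [Hb Hy]]] := row_split (etrans (Hr z) (esym (Hr' z))) Hc.
exists (transfer W1 z b v), (transfer (splice S W1 W') z y v); split.
- apply: reach_trans (reach_mono _ HR) (reach_transfer _ _ Ezv _) => //.
  + by rewrite W1z; lia.
  + by rewrite Hv.
- apply: reach_trans (reach_mono _ HR') (reach_transfer _ _ Ezv _) => //.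
  + by rewrite W1'z; lia.
  + by rewrite Hcol' Hv.
- rewrite mdist_transfer ?W1z ?W1'z //; apply: eq_bigr => x _; rewrite /splice.
  case: ifP => Sx; last by rewrite (reach_row HR) ?Sx.
  by rewrite (Hagree x Sx); apply: eq_bigr => c' _; rewrite !subnn.
Qed.

Lemma improve W W' x0 c0 : alloc W -> alloc W' -> W x0 c0 != W' x0 c0 ->
  exists V V', [/\ reach predT W V, reach predT W' V' & mdist V V' + 2 = mdist W W'].
Proof.
move=> HW HW' Hx0.
have [[HWp _] [HW'p _]] := (alloc_stateP _ HW, alloc_stateP _ HW').
case: (boolP (direct_move W W')) => [/(improve_direct HW'p) [V [HV Hd]]|Hnd].
  by exists V, W'; split => //; apply: reach_refl.
case: (boolP (direct_move W' W)) => [/(improve_direct HWp) [V' [HV' Hd]]|Hnd'].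
  by exists W, V'; split => //; [apply: reach_refl | rewrite mdistC [RHS]mdistC].
apply: improve_balanced Hx0 => // c; apply/eqP.
by rewrite eqn_leq (colsum_le_of_no_direct HW HW' Hnd) (colsum_le_of_no_direct HW' HW Hnd').
Qed.

Lemma alloc_connected W W' : alloc W -> alloc W' -> reach predT W W'.
Proof.
suff Hn : forall n W W', mdist W W' <= n -> alloc W -> alloc W' -> reach predT W W'.
  exact: Hn _ W W' (leqnn _).
elim=> [|n IH] {}W {}W' Hd HW HW';
  have [<-|[x0 [c0 /(improve HW HW') [V [V' [HV HV' HVV']]]]]] := natmat_eqVneq W W';
  try exact: reach_refl; first lia.
have HVV'reach : reach predT V V'.
  by apply: IH; [lia | exact: reach_alloc HV HW | exact: reach_alloc HV' HW'].
apply: reach_trans HV (reach_trans HVV'reach (reach_sym HV' _)).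
by case/alloc_stateP: HW'.
Qed.

End Hall.
End Moves.

Local Open Scope ring_scope.

(** * Reversible generators on a finite state space *)

Section Generator.
Variables (R : realFieldType) (S : finType) (D : pred S) (q : S -> S -> R).

Definition generator (s s' : S) : R :=
  if s == s' then - \sum_(s'' | D s'' && (s'' != s)) q s s'' else q s s'.

Definition positive_rate : rel S := fun s s' => [&& D s, D s' & 0 < q s s'].

Hypothesis q_ge0 : forall s s', D s -> D s' -> 0 <= q s s'.
Hypothesis irreducible : forall s s', D s -> D s' -> connect positive_rate s s'.

Lemma reversible_invariant (m : S -> R) :
  (forall s s', D s -> D s' -> m s * q s s' = m s' * q s' s) ->
  forall s', D s' -> \sum_(s | D s) m s * generator s s' = 0.
Proof.
move=> rev s' Ds'; rewrite (bigD1 s') //= {1}/generator eqxx.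
under eq_bigr => s /andP [Ds Hne] do rewrite /generator (negbTE Hne) rev //.
by rewrite -mulr_sumr mulrN addNr.
Qed.

(* Maximum principle: [h] attains its maximum on [D], and the maximum propagates along
   every positive rate. *)
Lemma harmonic_const (h : S -> R) :
  (forall s, D s -> \sum_(s' | D s' && (s' != s)) q s s' * (h s' - h s) = 0) ->
  forall s s', D s -> D s' -> h s = h s'.
Proof.
move=> harm s s' Ds Ds'.
have [smax Dsmax hmax] := arg_maxP h Ds.
have step s1 s2 : h s1 = h smax -> positive_rate s1 s2 -> h s2 = h smax.
  move=> hs1 /and3P [Ds1 Ds2 q12]; have [->//|Hne] := eqVneq s2 s1.
  have Hterm s3 : D s3 && (s3 != s1) -> 0 <= - (q s1 s3 * (h s3 - h s1)).
    by case/andP=> Ds3 _; rewrite -mulrN mulr_ge0 ?q_ge0 // oppr_ge0 subr_le0 hs1; apply: hmax.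
  have := psumr_eq0P Hterm; rewrite sumrN harm // oppr0 => /(_ erefl s2).
  rewrite Ds2 Hne => /(_ isT) /eqP.
  by rewrite oppr_eq0 mulf_eq0 gt_eqF //= subr_eq0 => /eqP ->.
have const s1 : D s1 -> h s1 = h smax.
  move=> Ds1; have /connectP [p Hp ->] := irreducible Dsmax Ds1.
  suff prop p' s0 : h s0 = h smax -> path positive_rate s0 p' -> h (last s0 p') = h smax.
    exact: prop.
  by elim: p' s0 => //= s2 p' IH s0 H0 /andP [J Hp']; apply: IH (step _ _ H0 J) Hp'.
by rewrite !const.
Qed.

Lemma sumr_gt0_of (I : finType) (P : pred I) (F : I -> R) i0 :
  (forall i, P i -> 0 <= F i) -> P i0 -> 0 < F i0 -> 0 < \sum_(i | P i) F i.
Proof.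
move=> F_ge0 Pi0 Fi0; rewrite (bigD1 i0) //= ltr_wpDr // sumr_ge0 // => i /andP [Pi _].
exact: F_ge0.
Qed.

(* A positive reversible measure is the only invariant one with the same total mass:
   the density of any invariant measure with respect to it is harmonic. *)
Lemma invariant_unique (m pi : S -> R) :
  (forall s, D s -> 0 < m s) ->
  (forall s s', D s -> D s' -> m s * q s s' = m s' * q s' s) ->
  \sum_(s | D s) pi s = \sum_(s | D s) m s ->
  (forall s', D s' -> \sum_(s | D s) pi s * generator s s' = 0) ->
  forall s, D s -> pi s = m s.
Proof.
move=> m_gt0 rev Hmass inv s Ds.
pose h s := pi s / m s.
have Hpi s1 : D s1 -> pi s1 = h s1 * m s1 by move=> D1; rewrite /h divfK // gt_eqF ?m_gt0.
have harm s1 : D s1 -> \sum_(s' | D s' && (s' != s1)) q s1 s' * (h s' - h s1) = 0.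
  move=> D1; have : \sum_(s | D s) pi s * generator s s1 =
      m s1 * \sum_(s' | D s' && (s' != s1)) q s1 s' * (h s' - h s1).
    rewrite (bigD1 s1) //= {1}/generator eqxx mulrN mulr_sumr -sumrN -big_split /=.
    rewrite mulr_sumr; apply: eq_bigr => s' /andP [Ds' Hne].
    by rewrite /generator (negbTE Hne) !Hpi // -mulrA rev //; ring.
  by rewrite inv // => /esym /eqP; rewrite mulf_eq0 gt_eqF ?m_gt0 //= => /eqP.
have hs : h s = 1.
  have sum_m_gt0 : 0 < \sum_(s' | D s') m s'.
    by apply: (sumr_gt0_of _ Ds (m_gt0 _ Ds)) => s' /m_gt0 /ltW.
  apply: (mulIf (lt0r_neq0 sum_m_gt0)); rewrite mul1r -[in RHS]Hmass mulr_sumr.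
  by apply: eq_bigr => s' Ds'; rewrite [RHS]Hpi // (harmonic_const harm Ds' Ds).
by rewrite Hpi // hs mul1r.
Qed.

End Generator.

(** * Detailed balance of the Gibbs measure *)

Lemma natr_mul_divK (F : numFieldType) (m n : nat) : (m <= n)%N -> n%:R * (m%:R / n%:R) = m%:R :> F.
Proof.
case: n => [|n] Hmn; first by move: Hmn; rewrite leqn0 => /eqP ->; rewrite !mul0r.
by rewrite mulrCA divff ?mulr1 // pnatr_eq0.
Qed.

Lemma sum_big_nat_incr (R : nmodType) (X : finType) (F : X -> nat -> R) (n : X -> nat) c :
  \sum_y \sum_(0 <= s < (n y + (y == c)%N).+1) F y s =
  \sum_y \sum_(0 <= s < (n y).+1) F y s + F c (n c).+1.
Proof.
rewrite (bigD1 c) //= [in RHS](bigD1 c) //= eqxx addn1 big_nat_recr //=.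
rewrite (eq_bigr (fun y => \sum_(0 <= s < (n y).+1) F y s)) => [|y /negbTE ->];
  last by rewrite addn0.
by rewrite -!addrA [_ + F _ _]addrC.
Qed.

Section Model.
Variables (R : realType) (X : finType) (E : rel X) (alpha beta : X -> nat).
Variables (lam : X -> R) (kc ka gamma nu : R) (Pall Pdis : natmat X -> X -> R).
Hypothesis nu_gt0 : 0 < nu.
Hypothesis Pmove : forall W : natmat X, partial_state X E alpha beta W -> forall x : X,
  [/\ 0 <= Pall W x, 0 <= Pdis W x, Pall W x + Pdis W x = 1,
      rowsum X W x = alpha x -> Pall W x = 0 & rowsum X W x = 0%N -> Pdis W x = 0].
Hypothesis hall : forall A : {set X}, A != set0 ->
  (\sum_(x in A) alpha x < \sum_(y in nbhd X E A) beta y)%N.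

Local Notation colsum := (colsum X).
Local Notation addE := (addE X).
Local Notation subE := (subE X).
Local Notation alloc := (alloc_state X E alpha beta).
Local Notation allocS := (allocS X E alpha beta).
Local Notation toMat := (toMat X alpha).
Local Notation avail := (avail X E beta).
Local Notation pchoice := (pchoice R X E beta lam kc ka gamma).
Local Notation rate := (rate R X E alpha beta lam kc ka gamma nu Pall Pdis).
Local Notation fxy := (fxy R X beta lam kc ka).
Local Notation Psi := (Psi R X beta lam kc ka).
Local Notation jump := (jump R X E alpha beta lam kc ka gamma nu Pall Pdis).
Local Notation mu := (mu R X E alpha beta lam kc ka gamma).

Lemma eqmatP (A B : natmat X) : reflect (A = B) (eqmat X A B).
Proof.
apply: (iffP forallP) => [H|->]; last by move=> a; apply/forallP.
by apply: natmat_ext => a b; have /forallP /(_ b) /eqP := H a.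
Qed.

(* On allocation states only distribution moves occur, and the activation rate
   [nu alpha_x] cancels the uniform choice [W_xb / W^x] of the unit to move. *)
Lemma rate_alloc W W' : alloc W -> rate W W' =
  nu * \sum_x \sum_b \sum_y
         (W x b)%:R * (pchoice (subE W x b) x y * (eqmat X (transfer W x b y) W')%:R).
Proof.
case/alloc_stateP=> HW Hrow; rewrite /Defs.rate mulr_sumr; apply: eq_bigr => x _.
have [_ _ Hsum /(_ (Hrow x)) Pall0 _] := Pmove HW x.
rewrite Pall0 add0r in Hsum; rewrite Pall0 Hsum mul0r add0r mul1r -mulrA; congr (nu * _).
rewrite mulr_sumr; apply: eq_bigr => b _.
by rewrite Hrow mulrA natr_mul_divK -?(Hrow x) ?le_rowsum // mulr_sumr.
Qed.

Lemma pchoice_ge0 V x y : 0 <= pchoice V x y.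
Proof.
rewrite /pchoice; case: ifP => // _.
by rewrite divr_ge0 ?sumr_ge0 // => *; apply/ltW/expR_gt0.
Qed.

Lemma pchoice_gt0 V x y : avail V x y -> 0 < pchoice V x y.
Proof.
move=> Hy; rewrite /pchoice Hy divr_gt0 ?expR_gt0 //.
by apply: (sumr_gt0_of _ Hy (expR_gt0 _)) => *; apply/ltW/expR_gt0.
Qed.

Lemma rate_ge0 W W' : alloc W -> 0 <= rate W W'.
Proof.
move=> HW; rewrite rate_alloc //; apply: mulr_ge0; first exact: ltW.
by do 3 (apply: sumr_ge0 => ? _); rewrite !mulr_ge0 ?pchoice_ge0.
Qed.

Lemma rate_transfer_gt0 W x b y : alloc W -> (0 < W x b)%N -> E x y ->
  (colsum W y < beta y)%N -> b != y -> 0 < rate W (transfer W x b y).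
Proof.
move=> HW Wxb Exy Hy Hby; rewrite rate_alloc // mulr_gt0 //.
have term_ge0 a b' y' : 0 <= (W a b')%:R *
    (pchoice (subE W a b') a y' * (eqmat X (transfer W a b' y') (transfer W x b y))%:R).
  by rewrite !mulr_ge0 ?pchoice_ge0.
apply: (sumr_gt0_of (i0 := x)) => // [a _|]; first by do 2 (apply: sumr_ge0 => ? _).
apply: (sumr_gt0_of (i0 := b)) => // [b' _|]; first by apply: sumr_ge0.
apply: (sumr_gt0_of (i0 := y)) => //.
rewrite (introT (eqmatP _ _) erefl) mulr1 mulr_gt0 ?ltr0n // pchoice_gt0 //.
by rewrite /avail Exy colsum_subE // eq_sym (negbTE Hby) subn0.
Qed.

Definition weight (W : natmat X) : R := multinom R X alpha W * expR (gamma * Psi W).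

Lemma prodn_fact_addE V x b :
  (\prod_a \prod_c (addE V x b a c)`! = (\prod_a \prod_c (V a c)`!) * (V x b).+1)%N.
Proof.
rewrite (bigD1 x) //= [in RHS](bigD1 x) //= (bigD1 b) //= [X in (_ = X * _ * _)%N](bigD1 b) //=.
rewrite /addE !eqxx /= addn1 factS.
rewrite (eq_bigr (fun c => (V x c)`!)) => [|c /negbTE ->]; last by rewrite addn0.
rewrite [X in (_ * X = _)%N](eq_bigr (fun a => \prod_c (V a c)`!)) => [|a /negbTE Ha]; first ring.
by apply: eq_bigr => c _; rewrite Ha addn0.
Qed.

Lemma weight_gt0 W : 0 < weight W.
Proof.
rewrite /weight /Defs.multinom mulr_gt0 ?expR_gt0 // divr_gt0 // ltr0n prodn_gt0 // => x.
  exact: fact_gt0.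
by rewrite prodn_gt0 // => y; exact: fact_gt0.
Qed.

Lemma Psi_addE V x c : Psi (addE V x c) = Psi V + fxy x c (addE V x c).
Proof.
rewrite /Defs.Psi /Defs.fxy.
under eq_bigr => y _ do rewrite colsum_addE.
rewrite (sum_big_nat_incr (fun y s => lam y - kc * s%:R / (beta y)%:R)).
have -> : \sum_a \sum_y \sum_(0 <= s < (addE V x c a y).+1) (s%:R : R) =
    \sum_a \sum_y \sum_(0 <= s < (V a y).+1) (s%:R : R) + (V x c).+1%:R.
  rewrite (bigD1 x) //= [in RHS](bigD1 x) //= /addE eqxx /=.
  rewrite (sum_big_nat_incr (fun (_ : X) (s : nat) => (s%:R : R)) (fun y => V x y)).
  rewrite [X in _ + X = _](eq_bigr (fun a => \sum_y \sum_(0 <= s < (V a y).+1) (s%:R : R)));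
    last by move=> a /negbTE Ha; apply: eq_bigr => y _; rewrite Ha addn0.
  by rewrite -!addrA [_ + _%:R]addrC.
rewrite colsum_addE /addE !eqxx /= !addn1.
ring.
Qed.

Lemma weight_pchoice_sym V x b y : avail V x b -> avail V x y ->
  weight (addE V x b) * ((addE V x b x b)%:R * pchoice V x y) =
  weight (addE V x y) * ((addE V x y x y)%:R * pchoice V x b).
Proof.
move=> Hb Hy.
rewrite /weight /Defs.multinom /pchoice Hb Hy !prodn_fact_addE !Psi_addE /addE !eqxx /= !addn1.
set Z := \sum_(y' | avail V x y') _.
set PV := (\prod_a \prod_c (V a c)`!)%N.
have PV_neq0 : (PV%:R : R) != 0.
  by rewrite pnatr_eq0 -lt0n prodn_gt0 // => a; rewrite prodn_gt0 // => c; rewrite fact_gt0.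
have Z_neq0 : Z != 0.
  by rewrite lt0r_neq0 // (sumr_gt0_of _ Hy (expR_gt0 _)) // => *; apply/ltW/expR_gt0.
have natS_neq0 (n : nat) : (1 + n%:R : R) != 0 by rewrite -[1]/(1%:R) -natrD pnatr_eq0.
rewrite !natrM !mulrDr !expRD; field.
by rewrite Z_neq0 PV_neq0 !natS_neq0.
Qed.

(* The share of [weight W * rate W W'] (up to [nu]) due to moving a unit of [x] from [b]
   to [y]. *)
Definition flow (W W' : natmat X) (x b y : X) : R :=
  weight W * ((W x b)%:R * (pchoice (subE W x b) x y * (eqmat X (transfer W x b y) W')%:R)).

Lemma flow0 W W' x b y :
  ~~ ((0 < W x b)%N && eqmat X (transfer W x b y) W') -> flow W W' x b y = 0.
Proof.
rewrite negb_and -leqNgt leqn0 /flow => /orP [/eqP ->|/negbTE ->]; first by rewrite mul0r mulr0.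
by rewrite !mulr0.
Qed.

Lemma flow_sym W W' x b y : alloc W -> alloc W' -> flow W W' x b y = flow W' W x y b.
Proof.
move=> /alloc_stateP [HW _] /alloc_stateP [HW' _].
case: (boolP ((0 < W x b)%N && eqmat X (transfer W x b y) W')) => [/andP [Wxb /eqmatP EW']|Hn].
  rewrite /flow -EW' transferK // !(introT (eqmatP _ _) erefl) !mulr1.
  have EV : subE (transfer W x b y) x y = subE W x b.
    by apply: natmat_ext => a c; rewrite /subE /transfer /addE addnK.
  rewrite EV; rewrite -EW' in HW'.
  have Vb : avail (subE W x b) x b.
    rewrite /avail (partial_support HW Wxb) colsum_subE // eqxx.
    by case/partial_stateP: HW => _ _ /(_ b); have := le_colsum W x b; lia.
  have Vy : avail (subE W x b) x y.
    rewrite /avail (partial_support HW' (transfer_gt0 _ Wxb)).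
    by case/partial_stateP: HW' => _ _ /(_ y); rewrite colsum_addE eqxx; lia.
  by move: (weight_pchoice_sym Vb Vy); rewrite -/(transfer W x b b) transfer_id.
rewrite !flow0 //; apply: contra Hn => /andP [W'xy /eqmatP <-].
by rewrite transfer_gt0 //=; apply/eqmatP; rewrite transferK.
Qed.

Lemma weight_rate W W' : alloc W ->
  weight W * rate W W' = nu * \sum_x \sum_b \sum_y flow W W' x b y.
Proof.
move=> HW; rewrite rate_alloc // mulrCA; congr (nu * _).
rewrite mulr_sumr; apply: eq_bigr => x _; rewrite mulr_sumr.
by apply: eq_bigr => b _; rewrite mulr_sumr.
Qed.

Lemma weight_rate_sym W W' : alloc W -> alloc W' -> weight W * rate W W' = weight W' * rate W' W.
Proof.
move=> HW HW'; rewrite !weight_rate //; congr (nu * _); apply: eq_bigr => x _.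
by rewrite exchange_big; apply: eq_bigr => y _; apply: eq_bigr => b _; apply: flow_sym.
Qed.

Definition ofMat (W : natmat X) : state X alpha := [ffun p => inord (W p.1 p.2)].

Lemma ofMatK W : alloc W -> toMat (ofMat W) = W.
Proof.
case/alloc_stateP=> _ Hrow; apply: natmat_ext => x y.
rewrite /Defs.toMat ffunE /= inordK // ltnS.
by apply: leq_trans (le_rowsum W x y) _; rewrite Hrow (leq_bigmax_cond x (P := xpredT)).
Qed.

Lemma toMatK : cancel toMat ofMat.
Proof. by move=> s; apply/ffunP => -[x y]; rewrite ffunE /= inord_val. Qed.

Lemma exists_allocS : exists s, allocS s.
Proof.
by have [W HW] := exists_alloc_state hall; exists (ofMat W); rewrite /Defs.allocS ofMatK.
Qed.

Lemma sum_gibbs_weight_gt0 s0 : allocS s0 ->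
  0 < \sum_(s | allocS s) gibbs_weight R X alpha beta lam kc ka gamma s.
Proof.
by move=> Hs0; apply: (sumr_gt0_of _ Hs0) => [s _|]; [apply/ltW|]; apply: weight_gt0.
Qed.

Lemma mu_gt0 s : allocS s -> 0 < mu s.
Proof.
by move=> Hs; rewrite /Defs.mu divr_gt0 ?(sum_gibbs_weight_gt0 Hs) //; apply: weight_gt0.
Qed.

Lemma sum_mu s0 : allocS s0 -> \sum_(s | allocS s) mu s = 1.
Proof.
by move=> Hs0; rewrite /Defs.mu -mulr_suml divff // lt0r_neq0 // (sum_gibbs_weight_gt0 Hs0).
Qed.

Lemma mu_reversible s s' : allocS s -> allocS s' ->
  mu s * rate (toMat s) (toMat s') = mu s' * rate (toMat s') (toMat s).
Proof.
by move=> Hs Hs'; rewrite /Defs.mu mulrAC [RHS]mulrAC; congr (_ / _); apply: weight_rate_sym.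
Qed.

Lemma reach_connect W W' :
  reach E beta predT W W' -> alloc W -> connect jump (ofMat W) (ofMat W').
Proof.
elim=> [W1 W2 HS HW1|W1 _|W1 W2 W3 HR12 IH12 _ IH23 HW1].
- have HW2 := reach_alloc (rt_step _ _ _ _ HS) HW1; apply: connect1.
  rewrite /Defs.jump /Defs.allocS !ofMatK // HW1 HW2 /=.
  by case: HS => [x [b [y [/andP [_ Wxb] Exy Hy Hby ->]]]]; apply: rate_transfer_gt0.
- exact: connect0.
- exact: connect_trans (IH12 HW1) (IH23 (reach_alloc HR12 HW1)).
Qed.

Lemma allocS_connected s s' : allocS s -> allocS s' -> connect jump s s'.
Proof.
move=> Hs Hs'; rewrite -(toMatK s) -(toMatK s').
exact: reach_connect (alloc_connected hall Hs Hs') Hs.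
Qed.

End Model.

Theorem corollary1 (R : realType) (X : finType) (E : rel X) (alpha beta : X -> nat)
  (lam : X -> R) (kc ka gamma nu : R) (Pall Pdis : natmat X -> X -> R) :
  0 <= kc -> 0 <= ka -> 0 < gamma -> 0 < nu ->
  (forall W : natmat X, partial_state X E alpha beta W -> forall x : X,
     [/\ 0 <= Pall W x, 0 <= Pdis W x, Pall W x + Pdis W x = 1,
         rowsum X W x = alpha x -> Pall W x = 0 &
         rowsum X W x = 0%N -> Pdis W x = 0]) ->
  (forall A : {set X}, A != set0 ->
     (\sum_(x in A) alpha x < \sum_(y in nbhd X E A) beta y)%N) ->
  let allocS := allocS X E alpha beta in
  let rate := rate R X E alpha beta lam kc ka gamma nu Pall Pdis in
  let Q := Qgen R X E alpha beta lam kc ka gamma nu Pall Pdis in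
  let mu := mu R X E alpha beta lam kc ka gamma in
  let toMat := toMat X alpha in
  [/\ (* the state space of allocation states is nonempty *)
      (exists s, allocS s) /\
      (* irreducibility (= ergodicity for a finite-state CTMC) *)
      (forall s s', allocS s -> allocS s' ->
         connect (jump R X E alpha beta lam kc ka gamma nu Pall Pdis) s s'),
      (* mu is a probability measure on allocation states *)
      ((forall s, allocS s -> 0 < mu s) /\ \sum_(s | allocS s) mu s = 1),
      (* time reversibility: detailed balance *)
      (forall s s', allocS s -> allocS s' ->
         mu s * rate (toMat s) (toMat s') = mu s' * rate (toMat s') (toMat s)),
      (* invariance *)
      (forall s', allocS s' -> \sum_(s | allocS s) mu s * Q s s' = 0) &
      (* uniqueness among invariant probability measures *)
      (forall pi : state X alpha -> R,
         (forall s, allocS s -> 0 <= pi s) -> \sum_(s | allocS s) pi s = 1 ->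
         (forall s', allocS s' -> \sum_(s | allocS s) pi s * Q s s' = 0) ->
         forall s, allocS s -> pi s = mu s)].
Proof.
move=> _ _ _ nu_gt0 Pmove hall allocS rate Q mu toMat.
have [s0 Hs0] := exists_allocS hall.
have sum_mu1 := sum_mu lam kc ka gamma Hs0.
have rev := mu_reversible lam kc ka gamma nu_gt0 Pmove.
have irr := allocS_connected lam kc ka gamma nu_gt0 Pmove hall.
have q_ge0 s s' : allocS s -> allocS s' -> 0 <= rate (toMat s) (toMat s').
  by move=> Hs _; apply: rate_ge0.
split.
- by split; [exists s0 | exact: irr].
- by split; [exact: mu_gt0 | exact: sum_mu1].
- exact: rev.
- exact: reversible_invariant rev.
- move=> pi _ sum_pi inv.
  apply: (invariant_unique q_ge0 irr (mu_gt0 lam kc ka gamma) rev) => //.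
  by rewrite sum_pi sum_mu1.
Qed.
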